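(* Let $P$ be a finite poset and $t\geq 2$, $n\geq 2$ integers. Suppose $\mathcal{F}\subseteq[t]^n$ is induced $P$-saturated and there exist $i,i'$ with $1\leq i<i'\leq n$ such that $f(i)=f(i')$ for all $f\in\mathcal{F}$. Then $L_i(\mathcal{F})=\{L_i(f):f\in\mathcal{F}\}$ is an induced $P$-saturated family in $[t]^{n+1}$.
   Context: For positive integers $n,t$, $[n]=\{1,\dots,n\}$ and the hypergrid $[t]^n$ is the set of functions $f:[n]\to[t]$, partially ordered by $f\leq g$ iff $f(i)\leq g(i)$ for all $i\in[n]$. An induced copy of a poset $P$ in a family $\mathcal{F}\subseteq[t]^n$ is an injective map $\phi:P\to\mathcal{F}$ such that $\phi(x)\leq\phi(y)$ iff $x\leq_P y$. A family $\mathcal{F}\subseteq[t]^n$ is induced $P$-free if it contains no induced copy of $P$; it is induced $P$-saturated if it is induced $P$-free and for every $f\in[t]^n\setminus\mathcal{F}$ the family $\mathcal{F}\cup\{f\}$ contains an induced copy of $P$. For $f\in[t]^n$ and $i\in[n]$, $L_i(f)\in[t]^{n+1}$ is defined by $L_i(f)(x)=f(x)$ for $x\in[n]$ and $L_i(f)(n+1)=f(i)$. *)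

From mathcomp Require Import all_boot all_order.
Set Implicit Arguments. Unset Strict Implicit. Unset Printing Implicit Defensive.
Import Order.Theory.

(* The hypergrid [t]^n: functions 'I_n -> 'I_t ('I_t = {0,...,t-1}, order-isomorphic
   to {1,...,t}), ordered pointwise. *)
Definition grid (n t : nat) := {ffun 'I_n -> 'I_t}.

Definition grid_le (n t : nat) (f g : grid n t) : bool :=
  [forall i, (f i <= g i)%N].

Definition induced_copy (d : Order.disp_t) (P : finPOrderType d) (n t : nat)
    (F : {set grid n t}) (phi : P -> grid n t) : Prop :=
  [/\ injective phi, (forall x, phi x \in F) &
      (forall x y, grid_le (phi x) (phi y) = (x <= y)%O)].

Definition induced_free d (P : finPOrderType d) n t (F : {set grid n t}) : Prop :=
  ~ exists phi : P -> grid n t, induced_copy F phi.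

Definition induced_saturated d (P : finPOrderType d) n t (F : {set grid n t}) : Prop :=
  induced_free P F /\
  forall f : grid n t, f \notin F ->
    exists phi : P -> grid n t, induced_copy (f |: F) phi.

(* Coordinates 0..n-1 of L_ext i f are those of f; coordinate n (the (n+1)-th) is f i. *)
Definition L_ext n t (i : 'I_n) (f : grid n t) : grid n.+1 t :=
  [ffun x : 'I_n.+1 => if unlift ord_max x is Some j then f j else f i].

From mathcomp Require Import all_boot all_order.

Set Implicit Arguments. Unset Strict Implicit. Unset Printing Implicit Defensive.
Import Order.TTheory.

(* L_i is an order embedding of [t]^n into [t]^(n+1), so an induced copy of P
   in L_i(F) pulls back to one in F.  For g outside L_i(F), let h in [t]^n agree
   with g off {i, i'} and take the maximum, resp. the minimum, of g(i), g(i'),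
   g(n+1) at i, resp. i'.  Members of F are constant on {i, i'}, hence compare
   with h exactly as their images under L_i compare with g.  In particular
   h is not in F (otherwise g = L_i(h)), and a copy of P in F ∪ {h}, with h
   replaced by g and every other f by L_i(f), is a copy of P in L_i(F) ∪ {g}. *)

Section OrdinalMaxMin.

Variable t : nat.
Implicit Types x y z : 'I_t.

Lemma Omax_leq x y z : (Order.max x y <= z)%N = (x <= z)%N && (y <= z)%N.
Proof. exact: (ge_max (T := 'I_t)). Qed.

Lemma Omin_leq x y z : (Order.min x y <= z)%N = (x <= z)%N || (y <= z)%N.
Proof. exact: (ge_min (T := 'I_t)). Qed.

Lemma leq_Omax x y z : (z <= Order.max x y)%N = (z <= x)%N || (z <= y)%N.
Proof. exact: (le_max (T := 'I_t)). Qed.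

Lemma leq_Omin x y z : (z <= Order.min x y)%N = (z <= x)%N && (z <= y)%N.
Proof. exact: (le_min (T := 'I_t)). Qed.

End OrdinalMaxMin.

Lemma grid_le_refl n t (f : grid n t) : grid_le f f.
Proof. exact/forallP. Qed.

Lemma grid_le_anti n t (f g : grid n t) : grid_le f g -> grid_le g f -> f = g.
Proof.
move=> /forallP le_fg /forallP le_gf; apply/ffunP => j.
by apply/val_inj/anti_leq; rewrite le_fg le_gf.
Qed.

Definition grid_embedding_on n m t (S : {set grid n t}) (e : grid n t -> grid m t) :=
  {in S &, forall f f', grid_le (e f) (e f') = grid_le f f'}.

Lemma induced_copy_imset d (P : finPOrderType d) n m t (S : {set grid n t})
    (e : grid n t -> grid m t) (phi : P -> grid n t) :
  grid_embedding_on S e -> induced_copy S phi -> induced_copy (e @: S) (e \o phi).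
Proof.
move=> emb_e [_ phiS le_phi].
have le_e x y : grid_le (e (phi x)) (e (phi y)) = (x <= y)%O by rewrite emb_e ?phiS.
split=> [x y /= e_xy | x | x y]; last exact: le_e; last exact: imset_f.
by apply/le_anti; rewrite -!le_e e_xy grid_le_refl.
Qed.

Lemma induced_free_of_imset d (P : finPOrderType d) n m t (S : {set grid n t})
    (e : grid n t -> grid m t) :
  grid_embedding_on S e -> induced_free P (e @: S) -> induced_free P S.
Proof.
by move=> emb_e free_eS [phi copy]; apply: free_eS; exists (e \o phi);
  apply: induced_copy_imset.
Qed.

Lemma grid_embedding_on_setU1 n m t (S : {set grid n t}) (e : grid n t -> grid m t)
    (h : grid n t) (g : grid m t) :
  grid_embedding_on S e ->
  {in S, forall f, grid_le g (e f) = grid_le h f} ->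
  {in S, forall f, grid_le (e f) g = grid_le f h} ->
  grid_embedding_on (h |: S) (fun f => if f == h then g else e f).
Proof.
move=> emb_e le_g le_to_g x y; rewrite !in_setU1.
case: eqVneq => [-> _ | _ /= xS]; case: eqVneq => [-> _ | _ /= yS];
  rewrite ?grid_le_refl //.
- exact: le_g.
- exact: le_to_g.
- exact: emb_e.
Qed.

Section ExtendLast.

Variables n t : nat.

Definition drop_last (g : grid n.+1 t) : grid n t := [ffun j => g (lift ord_max j)].

Variable i : 'I_n.

Lemma L_ext_lift (f : grid n t) j : L_ext i f (lift ord_max j) = f j.
Proof. by rewrite ffunE liftK. Qed.

Lemma L_ext_max (f : grid n t) : L_ext i f ord_max = f i.
Proof. by rewrite ffunE unlift_none. Qed.

Lemma L_extK : cancel (L_ext i) drop_last.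
Proof. by move=> f; apply/ffunP => j; rewrite ffunE L_ext_lift. Qed.

Lemma forall_lift_max (p : pred 'I_n.+1) :
  [forall x, p x] = [forall j, p (lift ord_max j)] && p ord_max.
Proof.
apply/forallP/andP => [p_all | [/forallP p_lift p_max] x].
  by split; [apply/forallP => j |]; apply: p_all.
by case: (unliftP ord_max x) => [j ->|->].
Qed.

Lemma grid_le_L_extr (g : grid n.+1 t) (f : grid n t) :
  grid_le g (L_ext i f) = grid_le (drop_last g) f && (g ord_max <= f i)%N.
Proof.
rewrite /grid_le forall_lift_max L_ext_max; congr (_ && _).
by apply: eq_forallb => j; rewrite L_ext_lift ffunE.
Qed.

Lemma grid_le_L_extl (g : grid n.+1 t) (f : grid n t) :
  grid_le (L_ext i f) g = grid_le f (drop_last g) && (f i <= g ord_max)%N.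
Proof.
rewrite /grid_le forall_lift_max L_ext_max; congr (_ && _).
by apply: eq_forallb => j; rewrite L_ext_lift ffunE.
Qed.

Lemma grid_le_L_ext (f f' : grid n t) :
  grid_le (L_ext i f) (L_ext i f') = grid_le f f'.
Proof.
by rewrite grid_le_L_extr L_extK L_ext_max andb_idr // => /forallP.
Qed.

Lemma drop_last_embedding (F : {set grid n t}) :
  grid_embedding_on (L_ext i @: F) drop_last.
Proof.
by move=> _ _ /imsetP[f _ ->] /imsetP[f' _ ->]; rewrite !L_extK grid_le_L_ext.
Qed.

Lemma drop_last_imset_L_ext (F : {set grid n t}) : drop_last @: (L_ext i @: F) = F.
Proof. by rewrite -imset_comp (eq_imset _ L_extK) imset_id. Qed.

Variable i' : 'I_n.
Hypothesis neq_ii' : i != i'.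
Variable g : grid n.+1 t.

Let r := drop_last g.
Let c := g ord_max.

Definition compress : grid n t :=
  [ffun j => if j == i then Order.max (Order.max (r i) (r i')) c
             else if j == i' then Order.min (Order.min (r i) (r i')) c
             else r j].

Lemma compress_i : compress i = Order.max (Order.max (r i) (r i')) c.
Proof. by rewrite ffunE eqxx. Qed.

Lemma compress_i' : compress i' = Order.min (Order.min (r i) (r i')) c.
Proof. by rewrite ffunE eqxx eq_sym (negbTE neq_ii'). Qed.

Lemma compress_other j : j != i -> j != i' -> compress j = r j.
Proof. by move=> /negbTE ji /negbTE ji'; rewrite ffunE ji ji'. Qed.

Lemma compress_le (f : grid n t) :
  f i = f i' -> grid_le compress f = grid_le g (L_ext i f).
Proof.
move=> f_ii'.
have le_max (v : 'I_t) : (compress i <= v)%N = [&& (r i <= v)%N, (r i' <= v)%N & (c <= v)%N].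
  by rewrite compress_i !Omax_leq andbA.
rewrite grid_le_L_extr -/c; apply/forallP/andP => [le_hf | [/forallP le_rf le_cf] j].
  have /[!le_max]/and3P[le_ri le_ri' le_c] := le_hf i.
  split=> //; apply/forallP => j.
  case: (eqVneq j i) => [-> // | ji]; case: (eqVneq j i') => [-> | ji'].
    by rewrite -f_ii'.
  by rewrite -compress_other // le_hf.
case: (eqVneq j i) => [-> | ji].
  by rewrite le_max le_rf le_cf f_ii' le_rf.
case: (eqVneq j i') => [-> | ji'].
  by rewrite compress_i' !Omin_leq le_rf orbT.
by rewrite compress_other // le_rf.
Qed.

Lemma le_compress (f : grid n t) :
  f i = f i' -> grid_le f compress = grid_le (L_ext i f) g.
Proof.
move=> f_ii'.
have le_min (v : 'I_t) : (v <= compress i')%N = [&& (v <= r i)%N, (v <= r i')%N & (v <= c)%N].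
  by rewrite compress_i' !leq_Omin andbA.
rewrite grid_le_L_extl -/c; apply/forallP/andP => [le_fh | [/forallP le_fr le_fc] j].
  have /[!le_min]/and3P[le_ri le_ri' le_c] := le_fh i'.
  split; last by rewrite f_ii'.
  apply/forallP => j.
  case: (eqVneq j i) => [-> | ji]; first by rewrite f_ii'.
  case: (eqVneq j i') => [-> // | ji'].
  by rewrite -compress_other // le_fh.
case: (eqVneq j i') => [-> | ji'].
  by rewrite le_min le_fr -f_ii' le_fr le_fc.
case: (eqVneq j i) => [-> | ji].
  by rewrite compress_i !leq_Omax le_fr.
by rewrite compress_other // le_fr.
Qed.

Lemma compress_notin (F : {set grid n t}) :
  {in F, forall f : grid n t, f i = f i'} -> g \notin L_ext i @: F -> compress \notin F.
Proof.
move=> diagF; apply: contra => hF.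
have h_ii' := diagF _ hF.
have <- : L_ext i compress = g.
  apply: grid_le_anti; first by rewrite -le_compress // grid_le_refl.
  by rewrite -compress_le // grid_le_refl.
exact: imset_f.
Qed.

End ExtendLast.

Theorem mainTheorem6 (d : Order.disp_t) (P : finPOrderType d) (t n : nat)
    (F : {set grid n t}) (i i' : 'I_n) :
  (2 <= t)%N -> (2 <= n)%N ->
  induced_saturated P F ->
  (i < i')%N ->
  (forall f, f \in F -> f i = f i') ->
  induced_saturated P [set L_ext i f | f in F].
Proof.
move=> _ _ [freeF satF] lt_ii' diagF.
have neq_ii' : i != i' by rewrite neq_ltn lt_ii'.
split.
  apply: (induced_free_of_imset (drop_last_embedding (i := i) (F := F))).
  by rewrite drop_last_imset_L_ext.
move=> g gNLF; set h := compress i i' g.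
have hNF : h \notin F by apply: compress_notin.
have [phi copy] := satF h hNF.
pose e f := if f == h then g else L_ext i f.
have -> : g |: L_ext i @: F = e @: (h |: F).
  rewrite imsetU1 /e eqxx; congr (_ |: _); apply: eq_in_imset => f fF.
  by rewrite ifN //; apply: contraNneq hNF => <-.
exists (e \o phi); apply: induced_copy_imset copy.
apply: grid_embedding_on_setU1 => [f f' _ _ | f fF | f fF].
- exact: grid_le_L_ext.
- by rewrite compress_le ?diagF.
- by rewrite le_compress ?diagF.
Qed.
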